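(* Let $(E,\rho)$ be a weighted space and let $A\subset C_b(E)$ be a subalgebra (with respect to pointwise multiplication) that contains the constant function $1_E$ and separates the points of $E$. Then $A$ is dense in $\mathscr{B}^\rho(E)$ with respect to $\|\cdot\|_\rho$.
   Context: A weighted space is a pair $(E,\rho)$ where $E$ is a completely regular Hausdorff topological space and $\rho:E\to(0,\infty)$ is an admissible weight function, meaning that for every $R\ge 0$ the sublevel set $K_R:=\{x\in E:\rho(x)\le R\}$ is compact. For $f:E\to\mathbb{R}$ put $\|f\|_\rho:=\sup_{x\in E}|f(x)|/\rho(x)$; $\mathscr{B}^\rho(E)$ denotes the closure of $C_b(E)$ (bounded continuous real functions on $E$) with respect to $\|\cdot\|_\rho$ inside the Banach space $\{f:E\to\mathbb{R}:\|f\|_\rho<\infty\}$. *)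

From mathcomp Require Import all_boot all_order all_algebra.
From mathcomp Require Import all_classical all_reals all_analysis.
Set Implicit Arguments. Unset Strict Implicit. Unset Printing Implicit Defensive.
Import Order.TTheory GRing.Theory Num.Theory.
Local Open Scope classical_set_scope.
Local Open Scope ring_scope.

Definition admissible_weight {R : realType} {E : topologicalType} (rho : E -> R) :=
  (forall x, 0 < rho x) /\ (forall r : R, 0 <= r -> compact [set x | rho x <= r]).

Definition wnorm {R : realType} {E : Type} (rho : E -> R) (f : E -> R) : \bar R :=
  ereal_sup [set ((`|f x| / rho x)%:E) | x in [set: E]].

Definition Cb {R : realType} {E : topologicalType} : set (E -> R) :=
  [set f | continuous f /\ exists M : R, forall x, `|f x| <= M].

Definition Brho {R : realType} {E : topologicalType} (rho : E -> R) : set (E -> R) :=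
  [set f | (wnorm rho f < +oo)%E /\
     forall eps : R, 0 < eps -> exists2 g, Cb g & (wnorm rho (f \- g)%R < eps%:E)%E].

Definition unital_subalgebra_Cb {R : realType} {E : topologicalType} (A : set (E -> R)) :=
  [/\ A `<=` Cb, A (cst 1),
      (forall f g, A f -> A g -> A (f \+ g)),
      (forall (c : R) f, A f -> A (fun x => c * f x)) &
      (forall f g, A f -> A g -> A (f \* g))].

Definition separates_points {R : realType} {E : Type} (A : set (E -> R)) :=
  forall x y : E, x <> y -> exists2 f, A f & f x <> f y.

From mathcomp Require Import all_boot all_order all_algebra.
From mathcomp Require Import all_classical all_reals all_analysis.
From mathcomp Require Import ring lra.
From HB Require Import structures.
Import Order.TTheory GRing.Theory Num.Theory numFieldNormedType.Exports.
Local Open Scope classical_set_scope.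
Local Open Scope ring_scope.
Set Implicit Arguments. Unset Strict Implicit.

(* As B^rho(E) is the rho-closure of C_b(E), it suffices to rho-approximate a
   single g in C_b(E), say |g| <= B.  The weight localizes the problem: off the
   compact sublevel set K = {rho <= r} an error |g - a| <= 2B + 1 is negligible
   against rho once r is large, and on K the weight is bounded below by some
   m > 0 (K is covered by the open sets {rho > q}, q > 0), so a uniform
   approximation of g on K that stays globally bounded suffices.  That is the
   Stone-Weierstrass theorem, proved in its lattice form:
   1. the iteration p_{n+1} = p_n + (t - p_n^2)/2 approximates sqrt t uniformly
      on [0,1], so |a| is a uniform limit of elements of A, for a in A;
   2. hence the uniform closure of A (continuous functions uniformly
      approximable by A) is closed under min and max;
   3. finite subcovers of K turn pointwise interpolants into an element of this
      closure that is uniformly close to g on K; clamping it to [-B, B] makes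
      the approximation globally bounded. *)

Section SqrtIteration.
Variable R : realType.

(* Polynomials in t converging to sqrt t, uniformly for t in [0,1]. *)
Fixpoint sqrt_iter (t : R) (n : nat) : R :=
  if n is n'.+1 then sqrt_iter t n' + (t - sqrt_iter t n' ^+ 2) / 2 else 0.

Lemma sqrt_iter_bound (s : R) n : 0 <= s <= 1 ->
  0 <= sqrt_iter (s ^+ 2) n <= s /\ s - sqrt_iter (s ^+ 2) n <= s * (1 - s / 2) ^+ n.
Proof.
move=> /andP[s0 s1]; elim: n => [|n [/andP[p0 ps] IH]] /=.
  by split; [apply/andP; split|rewrite expr0 mulr1 subr0]; lra.
set p := sqrt_iter _ n in p0 ps IH *.
split; first by apply/andP; split; nra.
have -> : s - (p + (s ^+ 2 - p ^+ 2) / 2) = (s - p) * (1 - (s + p) / 2).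
  by rewrite /GRing.exp /=; field.
apply: (@le_trans _ _ ((s - p) * (1 - s / 2))); first by apply: ler_wpM2l; lra.
rewrite exprS [X in _ <= X]mulrCA [X in X <= _]mulrC; apply: ler_wpM2l => //; lra.
Qed.

(* Uniform convergence on [0,1]: near s = 0 use p_n <= s, elsewhere the
   factor (1 - s/2)^n <= (1 - eps/2)^n, which tends to 0. *)
Lemma sqrt_iter_unif (eps : R) : 0 < eps -> exists n, forall s : R, 0 <= s <= 1 ->
  0 <= sqrt_iter (s ^+ 2) n <= s /\ s - sqrt_iter (s ^+ 2) n <= eps.
Proof.
move=> e0; have [e1|e1] := leP 1 eps.
  by exists 0%N => s /andP[s0 s1] /=; split; [apply/andP; split|lra].
have q1 : `|1 - eps / 2| < 1 by rewrite ger0_norm; lra.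
move: (cvg_expr q1) => /cvgr0_norm_lt /(_ _ e0) [N _ HN].
exists N => s hs; have [/andP[p0 ps] err] := sqrt_iter_bound N hs.
split; first by apply/andP.
move/andP: hs => [s0 s1]; have [se|se] := leP s eps; first lra.
have qN : (1 - eps / 2) ^+ N < eps.
  by have := HN N (leqnn N); rewrite /= ger0_norm //; apply: exprn_ge0; lra.
have decay : (1 - s / 2) ^+ N <= (1 - eps / 2) ^+ N.
  by apply: lerXn2r; rewrite ?inE ?nnegrE; lra.
have : s * (1 - s / 2) ^+ N <= (1 - s / 2) ^+ N.
  by rewrite -[X in _ <= X]mul1r; apply: ler_wpM2r => //; apply: exprn_ge0; lra.
lra.
Qed.

End SqrtIteration.

Definition clamp {R : realType} (B u : R) : R := Num.max (Num.min u B) (- B).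

Lemma clamp_approx (R : realType) (B u v : R) : `|v| <= B ->
  `|clamp B u| <= B /\ `|v - clamp B u| <= `|v - u|.
Proof.
rewrite /clamp => vB; have := vB; rewrite ler_norml => /andP[v1 v2].
have [uB|uB] := leP u B; last first.
  rewrite max_l; last lra.
  split; first by rewrite ler_norml; lra.
  by rewrite (ler0_norm (x := v - B)) ?(ler0_norm (x := v - u)); lra.
have [uB'|uB'] := leP u (- B); last by split => //; rewrite ler_norml; lra.
split; first by rewrite normrN ger0_norm; lra.
by rewrite (ger0_norm (x := v - - B)) ?(ger0_norm (x := v - u)); lra.
Qed.

Lemma seq_pos_lower_bound (R : realType) (s : seq R) : (forall q, q \in s -> 0 < q) ->
  exists2 m, 0 < m & forall q, q \in s -> m <= q.
Proof.
elim: s => [|a s IH] pos; first by exists 1.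
have [m m0 hm] := IH (fun q qs => pos q ltac:(by rewrite in_cons qs orbT)).
have a0 : 0 < a by apply: pos; rewrite mem_head.
exists (Num.min a m); first by rewrite lt_min a0 m0.
move=> q; rewrite in_cons => /orP[/eqP ->|qs]; rewrite ge_min ?lexx //.
by rewrite hm // orbT.
Qed.

Section PointedCover.
Variables (T : topologicalType) (t0 : T).

(* T pointed at t0: the library characterizes compactness by finite subcovers
   only for pointed spaces. *)
Definition pointed_at : Type := T.
HB.instance Definition _ := Topological.on pointed_at.
HB.instance Definition _ := isPointed.Build pointed_at t0.

Lemma compact_cover_at (K : set T) : compact K -> cover_compact K.
Proof.
move=> cK; have cover_char := @compact_cover pointed_at.
by have : @compact pointed_at K by []; rewrite cover_char.
Qed.

End PointedCover.

Lemma compact_finite_subcover (T : topologicalType) (K : set T) :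
  compact K -> cover_compact K.
Proof.
case: (pselect (K !=set0)) => [[t0 _]|K0]; first by move=> cK; apply: (compact_cover_at t0 cK).
by move=> _ I D f _ _; exists finmap.fset0 => // x Kx; case: K0; exists x.
Qed.

Lemma finite_min_closed (R : realType) (T : Type) (U : eqType) (P : set (T -> R))
    (F : U -> T -> R) (y0 : U) (s : seq U) :
  (forall f g, P f -> P g -> P (fun x => Num.min (f x) (g x))) ->
  (forall y, P (F y)) ->
  exists h, [/\ P h, forall z, h z <= F y0 z, forall z y, y \in s -> h z <= F y z &
    forall z, h z = F y0 z \/ exists2 y, y \in s & h z = F y z].
Proof.
move=> Pmin PF; elim: s => [|y s [h [Ph h_y0 h_s h_attained]]].
  by exists (F y0); split => // z; left.
exists (fun z => Num.min (F y z) (h z)); split.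
- exact: Pmin.
- by move=> z; rewrite ge_min h_y0 orbT.
- move=> z y'; rewrite in_cons => /orP[/eqP ->|ys]; first by rewrite ge_min lexx.
  by rewrite ge_min h_s ?orbT.
- move=> z; have [_|_] := leP (F y z) (h z).
    by right; exists y => //; rewrite mem_head.
  have [->|[y' ys ->]] := h_attained z; first by left.
  by right; exists y' => //; rewrite in_cons ys orbT.
Qed.

Section UniformClosure.
Variables (R : realType) (E : topologicalType) (A : set (E -> R)).
Hypothesis algA : unital_subalgebra_Cb A.

Lemma alg_Cb a : A a -> Cb a. Proof. by case: algA => h _ _ _ _; apply: h. Qed.
Lemma alg_add f g : A f -> A g -> A (f \+ g). Proof. by case: algA => _ _ h _ _; apply: h. Qed.
Lemma alg_scale c f : A f -> A (fun x => c * f x). Proof. by case: algA => _ _ _ h _; apply: h. Qed.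
Lemma alg_mul f g : A f -> A g -> A (f \* g). Proof. by case: algA => _ _ _ _ h; apply: h. Qed.

Lemma alg_cst (c : R) : A (fun _ => c).
Proof.
case: algA => _ A1 _ _ _; have := alg_scale c A1.
by congr A; apply/funext => x /=; rewrite mulr1.
Qed.

Lemma alg_sqrt_iter a (c : R) : A a -> c != 0 ->
  forall n, A (fun x => sqrt_iter ((a x / c) ^+ 2) n).
Proof.
move=> Aa c0; elim=> [|n IH] /=; first exact: alg_cst.
set P := fun x => sqrt_iter _ n in IH *.
have Asq : A (fun x => (1 / 2 / c ^+ 2) * (a \* a) x) by apply/alg_scale/alg_mul.
have APsq : A (fun x => (- 1 / 2) * (P \* P) x) by apply/alg_scale/alg_mul.
have := alg_add (alg_add IH Asq) APsq; congr A; apply/funext => x /=.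
by rewrite /P /GRing.exp /=; field.
Qed.

(* |a| is a uniform limit of elements of A: rescale a into [-1, 1] by a
   bound c and apply the square-root iteration to (a / c)^2. *)
Lemma alg_abs_approx a : A a -> forall eps : R, 0 < eps ->
  exists2 b, A b & forall x, `| `|a x| - b x| <= eps.
Proof.
move=> Aa eps e0; have [_ [M aM]] := alg_Cb Aa.
pose c := `|M| + 1; have c0 : 0 < c by rewrite /c; have := normr_ge0 M; lra.
have [n hn] := sqrt_iter_unif (divr_gt0 e0 c0).
exists (fun x => c * sqrt_iter ((a x / c) ^+ 2) n).
  by apply/alg_scale/alg_sqrt_iter; rewrite // gt_eqF.
move=> x; have ax01 : 0 <= `|a x| / c <= 1.
  apply/andP; split; first by apply: divr_ge0 => //; apply: ltW.
  rewrite ler_pdivrMr // mul1r.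
  by have := aM x; have := ler_norm M; rewrite /c; lra.
have -> : (a x / c) ^+ 2 = (`|a x| / c) ^+ 2 by rewrite !expr_div_n real_normK ?num_real.
have [/andP[p0 p1] p2] := hn _ ax01; set p := sqrt_iter _ n in p0 p1 p2 *.
have -> : `|a x| - c * p = c * (`|a x| / c - p) by field; rewrite gt_eqF.
rewrite normrM (gtr0_norm c0) ger0_norm; last lra.
by rewrite mulrC -ler_pdivlMr.
Qed.

Definition unif_closure (h : E -> R) := continuous h /\
  forall d : R, 0 < d -> exists2 a, A a & forall x, `|h x - a x| <= d.

Lemma unif_closure_alg a : A a -> unif_closure a.
Proof.
move=> Aa; split; first by case: (alg_Cb Aa).
by move=> d d0; exists a => // x; rewrite subrr normr0 ltW.
Qed.

Lemma unif_closure_cst (c : R) : unif_closure (fun _ => c).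
Proof. exact/unif_closure_alg/alg_cst. Qed.

Lemma unif_closure_add f g :
  unif_closure f -> unif_closure g -> unif_closure (fun x => f x + g x).
Proof.
move=> [fc fA] [gc gA]; split; first by move=> x; exact: (continuousD (fc x) (gc x)).
move=> d d0; have d2 : 0 < d / 2 by lra.
have [a Aa fa] := fA _ d2; have [b Ab gb] := gA _ d2.
exists (a \+ b); first exact: alg_add.
move=> x /=; have := fa x; have := gb x.
have -> : f x + g x - (a x + b x) = (f x - a x) + (g x - b x) by ring.
have := ler_normD (f x - a x) (g x - b x); lra.
Qed.

Lemma unif_closure_scale c f : unif_closure f -> unif_closure (fun x => c * f x).
Proof.
move=> [fc fA]; split.
  by move=> x; exact: (continuousM (@cst_continuous E R c x) (fc x)).
move=> d d0; have c1 : 0 < `|c| + 1 by have := normr_ge0 c; lra.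
have [a Aa fa] := fA _ (divr_gt0 d0 c1); exists (fun x => c * a x); first exact: alg_scale.
move=> x; rewrite -mulrBr normrM.
have : (`|c| + 1) * `|f x - a x| <= d by rewrite mulrC -ler_pdivlMr.
have := normr_ge0 (f x - a x); nra.
Qed.

Lemma unif_closure_abs f : unif_closure f -> unif_closure (fun x => `|f x|).
Proof.
move=> [fc fA]; split.
  by move=> x; apply: (continuous_comp (fc x)); exact: norm_continuous.
move=> d d0; have d2 : 0 < d / 2 by lra.
have [a Aa fa] := fA _ d2; have [b Ab ab] := alg_abs_approx Aa d2.
exists b => // x; have := fa x; have := ab x.
have := ler_dist_dist (f x) (a x); have := ler_distD (`|a x|) (`|f x|) (b x); lra.
Qed.

Lemma unif_closure_min f g : unif_closure f -> unif_closure g ->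
  unif_closure (fun x => Num.min (f x) (g x)).
Proof.
move=> Lf Lg; have Ldist := unif_closure_abs (unif_closure_add Lf (unif_closure_scale (-1) Lg)).
have := unif_closure_scale (1 / 2) (unif_closure_add (unif_closure_add Lf Lg)
  (unif_closure_scale (-1) Ldist)).
by congr unif_closure; apply/funext => x; rewrite minr_absE !mulN1r; lra.
Qed.

Lemma unif_closure_max f g : unif_closure f -> unif_closure g ->
  unif_closure (fun x => Num.max (f x) (g x)).
Proof.
move=> Lf Lg; have Ldist := unif_closure_abs (unif_closure_add Lf (unif_closure_scale (-1) Lg)).
have := unif_closure_scale (1 / 2) (unif_closure_add (unif_closure_add Lf Lg) Ldist).
by congr unif_closure; apply/funext => x; rewrite maxr_absE !mulN1r; lra.
Qed.

End UniformClosure.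

Section StoneWeierstrass.
Variables (R : realType) (E : topologicalType) (A : set (E -> R)).
Hypotheses (algA : unital_subalgebra_Cb A) (sepA : separates_points A).

Lemma alg_interpolate (g : E -> R) x y : exists a, [/\ A a, a x = g x & a y = g y].
Proof.
case: (pselect (x = y)) => [<-|nxy]; first by exists (fun _ => g x); split => //; exact: alg_cst.
have [f Af fxy] := sepA nxy.
have fxy' : f y - f x != 0 by rewrite subr_eq0; apply/eqP => /esym.
pose k := (g y - g x) / (f y - f x).
exists (fun z => g x + k * (f z - f x)); split.
- apply: (alg_add algA (alg_cst algA _)); apply: (alg_scale algA).
  exact: (alg_add algA Af (alg_cst algA _)).
- by rewrite subrr mulr0 addr0.
- by rewrite /k; field.
Qed.

(* Some h in the uniform closure touches g at x and stays below g + d on K: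
   the minimum of interpolants at (x, y) over a finite subcover of K. *)
Lemma unif_closure_nearly_below (g : E -> R) (K : set E) (d : R) x :
  continuous g -> compact K -> 0 < d ->
  exists h, [/\ unif_closure A h, h x = g x & forall z, K z -> h z < g z + d].
Proof.
move=> gc cK d0; have /choice [F F_interp] := alg_interpolate g x.
have AF y : A (F y) by case: (F_interp y).
have Fx y : F y x = g x by case: (F_interp y).
have Fy y : F y y = g y by case: (F_interp y).
pose U y := [set z | F y z - g z < d].
have U_open y : K y -> open (U y).
  move=> _; have [Fc _] := alg_Cb algA (AF y).
  apply: (@open_comp _ _ (fun z => F y z - g z) [set r | r < d]); last exact: open_lt.
  by move=> z _; exact: (continuousB (Fc z) (gc z)).
have U_cover : K `<=` cover K U by move=> z Kz; exists z => //; rewrite /U /= Fy subrr.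
have [D _ DU] := compact_finite_subcover cK U_open U_cover.
have [h [Lh _ h_D h_attained]] := finite_min_closed x (finmap.enum_fset D)
  (unif_closure_min algA) (fun y => unif_closure_alg algA (AF y)).
exists h; split => //; first by have [->|[y _ ->]] := h_attained x; apply: Fx.
by move=> z Kz; have [y yD Uyz] := DU z Kz; have := h_D z y yD; move: Uyz; rewrite /U /=; lra.
Qed.

(* Stone-Weierstrass on a compact set: the maximum of finitely many of the
   functions of unif_closure_nearly_below, over a finite subcover of K. *)
Lemma stone_weierstrass_compact (g : E -> R) (K : set E) (d : R) :
  continuous g -> compact K -> 0 < d ->
  exists2 h, unif_closure A h & forall z, K z -> `|g z - h z| < d.
Proof.
move=> gc cK d0; case: (pselect (K !=set0)) => [[x0 Kx0]|K0]; last first.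
  exists (fun _ => 0); first exact: (unif_closure_cst algA 0).
  by move=> z Kz; case: K0; exists z.
have /choice [H H_spec] : forall x, exists h, [/\ unif_closure A h, h x = g x &
    forall z, K z -> h z < g z + d] by move=> x; exact: unif_closure_nearly_below.
have LH y : unif_closure A (H y) by case: (H_spec y).
have Hy y : H y y = g y by case: (H_spec y).
have H_below y z : K z -> H y z < g z + d by case: (H_spec y) => _ _; apply.
pose V y := [set z | g z - H y z < d].
have V_open y : K y -> open (V y).
  move=> _; have [Hc _] := LH y.
  apply: (@open_comp _ _ (fun z => g z - H y z) [set r | r < d]); last exact: open_lt.
  by move=> z _; exact: (continuousB (gc z) (Hc z)).
have V_cover : K `<=` cover K V by move=> z Kz; exists z => //; rewrite /V /= Hy subrr.
have [D _ DV] := compact_finite_subcover cK V_open V_cover.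
have LnegH y : unif_closure A (fun z => - H y z).
  have := unif_closure_scale algA (-1) (LH y).
  by congr unif_closure; apply/funext => z; rewrite mulN1r.
have [m [Lm _ m_D m_attained]] := finite_min_closed x0 (finmap.enum_fset D)
  (unif_closure_min algA) LnegH.
exists (fun z => - m z).
  have := unif_closure_scale algA (-1) Lm.
  by congr unif_closure; apply/funext => z; rewrite mulN1r.
move=> z Kz; rewrite ltr_norml; have [y yD] := DV z Kz; rewrite /V /= => Vyz.
have := m_D z y yD; suff : - m z < g z + d by lra.
have [->|[y' _ ->]] := m_attained z; rewrite opprK; exact: H_below.
Qed.

(* Bounded version: for |g| <= B, an element of A is 2d-close to g on K and
   (2B + d)-close everywhere; clamp the Stone-Weierstrass approximant to
   [-B, B] before approximating it by A. *)
Lemma alg_bounded_approx (g : E -> R) (B : R) (K : set E) (d : R) :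
  continuous g -> (forall x, `|g x| <= B) -> compact K -> 0 < d ->
  exists2 a, A a & forall x, `|g x - a x| <= 2 * B + d /\ (K x -> `|g x - a x| <= 2 * d).
Proof.
move=> gc gB cK d0; have [h Lh hK] := stone_weierstrass_compact gc cK d0.
have Lc : unif_closure A (fun x => clamp B (h x)).
  have Lmin := unif_closure_min algA Lh (unif_closure_cst algA B).
  exact: (unif_closure_max algA Lmin (unif_closure_cst algA (- B))).
have [a Aa ca] := Lc.2 d d0; exists a => // x.
have [cB gc_h] := clamp_approx (h x) (gB x); have := ca x.
have := ler_distD (clamp B (h x)) (g x) (a x); have := gB x.
have := ler_normB (g x) (clamp B (h x)); split; first lra.
by move=> Kx; have := hK x Kx; lra.
Qed.

End StoneWeierstrass.

(* On a compact sublevel set {rho <= r} the weight is bounded away from 0: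
   the open sets {rho > q}, q > 0, cover it (they are complements of the
   compact, hence closed, sublevel sets {rho <= q}). *)
Lemma weight_lower_bound (R : realType) (E : topologicalType) (rho : E -> R) :
  hausdorff_space E -> admissible_weight rho ->
  forall r : R, 0 <= r -> exists2 m, 0 < m & forall x, rho x <= r -> m <= rho x.
Proof.
move=> hausE [rho_pos rho_cpt] r r0.
pose W q := [set x | q < rho x].
have W_open q : [set q : R | 0 < q] q -> open (W q).
  move=> /= q0; have -> : W q = ~` [set x | rho x <= q].
    apply/seteqP; split => x; rewrite /W /=; first by move=> qx xq; lra.
    by move=> xq; rewrite ltNge; apply/negP.
  by rewrite openC; apply: compact_closed => //; apply: rho_cpt; apply: ltW.
have W_cover : [set x | rho x <= r] `<=` cover [set q : R | 0 < q] W.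
  by move=> x _; exists (rho x / 2); rewrite /W /=; have := rho_pos x; lra.
have [D Dpos DW] := compact_finite_subcover (rho_cpt r r0) W_open W_cover.
have [m m0 hm] := @seq_pos_lower_bound R (finmap.enum_fset D)
  (fun q qD => ltac:(by have := Dpos q qD; rewrite inE)).
exists m => // x rx; have [q qD] := DW x rx; rewrite /W /= => qx.
by have := hm q qD; lra.
Qed.

Section WeightedNorm.
Variables (R : realType) (E : Type) (rho : E -> R).
Hypothesis rho_pos : forall x, 0 < rho x.

Lemma wnorm_lt_pointwise (h : E -> R) (c : R) x :
  (wnorm rho h < c%:E)%E -> `|h x| < c * rho x.
Proof.
move=> hc; rewrite -ltr_pdivrMr // -lte_fin; apply: le_lt_trans hc.
by apply: ereal_sup_ubound; exists x.
Qed.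

Lemma wnorm_le_pointwise (h : E -> R) (c : R) :
  (forall x, `|h x| <= c * rho x) -> (wnorm rho h <= c%:E)%E.
Proof.
move=> hc; apply: ge_ereal_sup => _ [x _ <-].
by rewrite lee_fin ler_pdivrMr.
Qed.

End WeightedNorm.

Section WeightedApproximation.
Variables (R : realType) (E : topologicalType) (rho : E -> R) (A : set (E -> R)).
Hypotheses (hausE : hausdorff_space E) (adm : admissible_weight rho).
Hypotheses (algA : unital_subalgebra_Cb A) (sepA : separates_points A).

(* Every g in C_b(E) is approximated by A within eps * rho: use the bounded
   approximation on the sublevel set {rho <= r} where the weight is at least
   m, and r so large that the global error 2B + 1 is at most eps * r. *)
Lemma alg_weighted_approx (g : E -> R) (eps : R) : Cb g -> 0 < eps ->
  exists2 a, A a & forall x, `|g x - a x| <= eps * rho x.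
Proof.
move=> [gc [M gM]] e0; pose B := `|M|.
have gB x : `|g x| <= B by apply: le_trans (gM x) (ler_norm M).
have B0 : 0 <= B by apply: normr_ge0.
pose r := (2 * B + 1) / eps.
have r0 : 0 <= r by apply: divr_ge0; [lra | exact: ltW].
have [m m0 hm] := weight_lower_bound hausE adm r0.
pose d := Num.min 1 (m * eps / 2).
have d0 : 0 < d by rewrite lt_min ltr01 /=; apply: divr_gt0 => //; apply: mulr_gt0.
have d1 : d <= 1 by rewrite ge_min lexx.
have d2 : d <= m * eps / 2 by rewrite ge_min lexx orbT.
have [a Aa ga] := alg_bounded_approx algA sepA gc gB (adm.2 r r0) d0.
exists a => // x; have [ga_far ga_near] := ga x; have rx := adm.1 x.
have [rxr|rxr] := leP (rho x) r.
  have : eps * m <= eps * rho x by apply: ler_wpM2l; [exact: ltW | exact: hm].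
  have := ga_near rxr; lra.
have : eps * r < eps * rho x by rewrite ltr_pM2l.
have -> : eps * r = 2 * B + 1 by rewrite /r; field; rewrite gt_eqF.
lra.
Qed.

End WeightedApproximation.

Theorem mainTheorem3 (R : realType) (E : topologicalType) (rho : E -> R)
  (A : set (E -> R)) :
  hausdorff_space E -> completely_regular_space E ->
  admissible_weight rho ->
  unital_subalgebra_Cb A -> separates_points A ->
  forall f : E -> R, Brho rho f ->
  forall eps : R, 0 < eps -> exists2 a, A a & (wnorm rho (f \- a)%R < eps%:E)%E.
Proof.
move=> hausE _ adm algA sepA f [_ f_approx] eps e0.
have [g Cg fg] := f_approx _ (divr_gt0 e0 (ltr0n _ 2)).
have [a Aa ga] := alg_weighted_approx hausE adm algA sepA Cg (divr_gt0 e0 (ltr0n _ 4)).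
exists a => //.
apply: (@le_lt_trans _ _ (eps * 3 / 4)%:E); last by rewrite lte_fin; lra.
apply: (wnorm_le_pointwise adm.1) => x /=.
have := wnorm_lt_pointwise adm.1 x fg; have := ga x; have := adm.1 x.
have := ler_distD (g x) (f x) (a x); lra.
Qed.
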